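(* Let $\Pi$ be a set of similarities on a set $\Omega$ which is a monoid with involution, write $\approx$ for $\approx_\Pi$, and let $\pi\in\Pi$. Then: (1) $\pi/\!\approx\;=\{([a],[b]):a\pi b\}$ is a permutation of $\Omega/\!\approx$; (2) if $R\subseteq\Omega^k$ is invariant under $\approx$ then $R\,\pi\,\pi(R)$; (3) if moreover $\approx_\Pi\in\Pi$, then for every ordinal $\alpha$, all $\bar a,\bar b\in\Omega^\alpha$ with $\bar a\,\pi\,\bar b$, and every formula $\phi(\bar x)$ of $\mathscr L^-_{\infty\infty}(\mathrm{Inv}(\Pi))$: $\Omega,\mathrm{Inv}(\Pi)\models\phi(\bar a)\iff\Omega,\mathrm{Inv}(\Pi)\models\phi(\bar b)$.
   Context: A similarity on $\Omega$ is a relation $\pi\subseteq\Omega\times\Omega$ such that every $a$ has some $b$ with $a\pi b$ and every $b$ has some $a$ with $a\pi b$; $\bar a\,\pi\,\bar b$ means coordinatewise relatedness; for $R,S\subseteq\Omega^k$, $R\,\pi\,S$ means $\bar a\pi\bar b$ implies ($\bar a\in R\iff\bar b\in S$); $\pi(R)=\{\bar b:\exists\bar a\in R,\ \bar a\pi\bar b\}$. $\Pi$ is a monoid with involution if closed under relational composition and converses. $a\approx_\Pi b$ iff for every finite $k$ and every $\bar c\in\Omega^k$ there is $\pi\in\Pi$ with $(a,\bar c)\,\pi\,(b,\bar c)$. $R$ is invariant under $\pi$ (resp. $\approx$) if $\bar a\pi\bar b$ (resp. $\bar a\approx\bar b$) implies $\bar a\in R\iff\bar b\in R$. A quantifier on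 $\Omega$ is a subset of $\mathcal P(\Omega^{k_1})\times\cdots\times\mathcal P(\Omega^{k_l})$; it is $\approx$-invariant under $\pi$ if for all $\bar R,\bar S$ of its type with every component invariant under $\approx$ and $R_i\,\pi\,S_i$ for all $i$: $\bar R\in Q\iff\bar S\in Q$. $\mathrm{Inv}(\Pi)$ is the set of all finitary relations invariant under every $\pi\in\Pi$ and all quantifiers $\approx_\Pi$-invariant under every $\pi\in\Pi$. $\mathscr L^-_{\infty\infty}(\mathrm{Inv}(\Pi))$ is the equality-free infinitary logic with predicate symbols and Lindström quantifier symbols for these, interpreted in $\Omega$. *)

From mathcomp Require Import all_boot.
Set Implicit Arguments. Unset Strict Implicit. Unset Printing Implicit Defensive.

Definition brel (Omega : Type) := Omega -> Omega -> Prop.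
Definition tup (Omega : Type) (k : nat) := 'I_k -> Omega.

Definition is_similarity (Omega : Type) (p : brel Omega) : Prop :=
  (forall a, exists b, p a b) /\ (forall b, exists a, p a b).

Definition rcomp (Omega : Type) (p q : brel Omega) : brel Omega :=
  fun a c => exists b, p a b /\ q b c.
Definition rconv (Omega : Type) (p : brel Omega) : brel Omega :=
  fun a b => p b a.

Definition sim_monoid_inv (Omega : Type) (Pi : brel Omega -> Prop) : Prop :=
  (forall p, Pi p -> is_similarity p) /\
  (forall p q, Pi p -> Pi q -> Pi (rcomp p q)) /\
  (forall p, Pi p -> Pi (rconv p)).

Definition trel (Omega I : Type) (p : brel Omega) (a b : I -> Omega) : Prop :=
  forall i, p (a i) (b i).

Definition approx (Omega : Type) (Pi : brel Omega -> Prop) : brel Omega :=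
  fun a b => forall (k : nat) (c : tup Omega k),
    exists p, Pi p /\ p a b /\ trel p c c.

Definition rel_sim (Omega : Type) (k : nat) (p : brel Omega)
  (R S : tup Omega k -> Prop) : Prop :=
  forall a b, trel p a b -> (R a <-> S b).

Definition rimage (Omega : Type) (k : nat) (p : brel Omega)
  (R : tup Omega k -> Prop) : tup Omega k -> Prop :=
  fun b => exists a, R a /\ trel p a b.

Definition invariant_under (Omega : Type) (k : nat) (p : brel Omega)
  (R : tup Omega k -> Prop) : Prop :=
  forall a b, trel p a b -> (R a <-> R b).

Definition inv_rel (Omega : Type) (Pi : brel Omega -> Prop) (k : nat)
  (R : tup Omega k -> Prop) : Prop :=
  forall p, Pi p -> invariant_under p R.

Definition quantifier (Omega : Type) (l : nat) (ks : 'I_l -> nat) :=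
  (forall i : 'I_l, tup Omega (ks i) -> Prop) -> Prop.

Definition qinv_under (Omega : Type) (Pi : brel Omega -> Prop) (p : brel Omega)
  (l : nat) (ks : 'I_l -> nat) (Q : quantifier Omega ks) : Prop :=
  forall Rs Ss : forall i : 'I_l, tup Omega (ks i) -> Prop,
    (forall i, invariant_under (approx Pi) (Rs i)) ->
    (forall i, invariant_under (approx Pi) (Ss i)) ->
    (forall i, rel_sim p (Rs i) (Ss i)) ->
    (Q Rs <-> Q Ss).

Definition inv_quant (Omega : Type) (Pi : brel Omega -> Prop)
  (l : nat) (ks : 'I_l -> nat) (Q : quantifier Omega ks) : Prop :=
  forall p, Pi p -> qinv_under Pi p Q.

(* Equality-free infinitary logic L^-_{oo oo}(Inv(Pi)); formulas are indexed
   by their type of (free) variables V. *)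
Inductive formula (Omega : Type) (Pi : brel Omega -> Prop) : Type -> Type :=
| FRel : forall (V : Type) (k : nat) (R : tup Omega k -> Prop),
    inv_rel Pi R -> ('I_k -> V) -> formula Pi V
| FNeg : forall (V : Type), formula Pi V -> formula Pi V
| FAnd : forall (V : Type) (J : Type), (J -> formula Pi V) -> formula Pi V
| FEx  : forall (V : Type) (W : Type), formula Pi (V + W) -> formula Pi V
| FQ   : forall (V : Type) (l : nat) (ks : 'I_l -> nat) (Q : quantifier Omega ks),
    inv_quant Pi Q -> (forall i : 'I_l, formula Pi (V + 'I_(ks i))) -> formula Pi V.

Definition join (Omega V W : Type) (a : V -> Omega) (c : W -> Omega) :
  V + W -> Omega := fun x => match x with inl v => a v | inr w => c w end.

Fixpoint sat (Omega : Type) (Pi : brel Omega -> Prop) (V : Type)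
  (phi : formula Pi V) {struct phi} : (V -> Omega) -> Prop :=
  match phi in formula _ V0 return (V0 -> Omega) -> Prop with
  | FRel _ _ R _ v => fun a => R (fun j => a (v j))
  | FNeg _ f => fun a => ~ sat f a
  | FAnd _ J fs => fun a => forall j : J, sat (fs j) a
  | FEx _ W f => fun a => exists c : W -> Omega, sat f (join a c)
  | FQ _ l ks Q _ fs => fun a => Q (fun i c => sat (fs i) (join a c))
  end.

Definition cls (Omega : Type) (Pi : brel Omega -> Prop) (a : Omega) : Omega -> Prop :=
  fun x => approx Pi a x.
Definition quot (Omega : Type) (Pi : brel Omega -> Prop) : (Omega -> Prop) -> Prop :=
  fun C => exists a, C = cls Pi a.
Definition quot_rel (Omega : Type) (Pi : brel Omega -> Prop) (p : brel Omega) :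
  (Omega -> Prop) -> (Omega -> Prop) -> Prop :=
  fun C D => exists a b, p a b /\ C = cls Pi a /\ D = cls Pi b.

Definition is_perm_of (X : Type) (S : X -> Prop) (F : X -> X -> Prop) : Prop :=
  (forall C D, F C D -> S C /\ S D) /\
  (forall C, S C -> exists! D, F C D) /\
  (forall D, S D -> exists! C, F C D).

From mathcomp Require Import all_boot.
From Stdlib Require Import IndefiniteDescription FunctionalExtensionality PropExtensionality.

(* The key
   observation is that every q in Pi "transports" the relation ≈ = ≈_Pi:
   if q a1 b1, q a2 b2 and a1 ≈ a2, then b1 ≈ b2 (given parameters c, pull
   them back along q, witness a1 ≈ a2 there by some r in Pi, and use the
   composite q^-1 ; r ; q).  Together with ≈ being an equivalence relation
   this gives:
   (1) q/≈ is a total, single-valued relation on Omega/≈ for every q in Pi;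
       applied to p and to its converse it is a permutation;
   (2) for a ≈-invariant R, a point of p(R) is p-related to a ≈-equivalent
       point of R, whence R p p(R);
   (3) by induction on formulas, satisfaction is invariant under every q in
       Pi; only the quantifier case needs ≈ in Pi, to know that the relations
       defined by subformulas are ≈-invariant. *)

Set Implicit Arguments. Unset Strict Implicit.

Section Similarities.

Variables (Omega : Type) (Pi : brel Omega -> Prop).
Hypothesis HPi : sim_monoid_inv Pi.

Let sim_of q (Hq : Pi q) : is_similarity q := proj1 HPi q Hq.
Let comp_in q r (Hq : Pi q) (Hr : Pi r) : Pi (rcomp q r) := proj1 (proj2 HPi) q r Hq Hr.
Let conv_in q (Hq : Pi q) : Pi (rconv q) := proj2 (proj2 HPi) q Hq.

Lemma lift_forward q (Hq : Pi q) (I : Type) (a : I -> Omega) :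
  exists b : I -> Omega, trel q a b.
Proof. apply (functional_choice (fun i => q (a i))); intros i; exact (proj1 (sim_of Hq) (a i)). Qed.

Lemma lift_backward q (Hq : Pi q) (I : Type) (b : I -> Omega) :
  exists a : I -> Omega, trel q a b.
Proof. apply (functional_choice (fun i x => q x (b i))); intros i; exact (proj2 (sim_of Hq) (b i)). Qed.

(* ≈ is an equivalence relation; reflexivity needs Pi to be nonempty. *)
Lemma approx_refl q (Hq : Pi q) a : approx Pi a a.
Proof.
  intros k c. exists (rcomp q (rconv q)). split; [apply comp_in; auto|].
  assert (Hdiag : forall x, rcomp q (rconv q) x x).
  { intros x. destruct (proj1 (sim_of Hq) x) as [y Hy]. exists y; split; auto. }
  split; [apply Hdiag | intros i; apply Hdiag].
Qed.

Lemma approx_sym a b : approx Pi a b -> approx Pi b a.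
Proof.
  intros Hab k c. destruct (Hab k c) as [q [Hq [Hqab Hqc]]].
  exists (rconv q). split; [apply conv_in; auto | split; [exact Hqab | exact Hqc]].
Qed.

Lemma approx_trans a b c : approx Pi a b -> approx Pi b c -> approx Pi a c.
Proof.
  intros Hab Hbc k d.
  destruct (Hab k d) as [q [Hq [Hqab Hqd]]], (Hbc k d) as [r [Hr [Hrbc Hrd]]].
  exists (rcomp q r). split; [apply comp_in; auto|]. split.
  - exists b; auto.
  - intros i. exists (d i); auto.
Qed.

Lemma approx_transport q (Hq : Pi q) a1 b1 a2 b2 :
  q a1 b1 -> q a2 b2 -> approx Pi a1 a2 -> approx Pi b1 b2.
Proof.
  intros H1 H2 Ha k c.
  destruct (lift_backward Hq c) as [d Hd].
  destruct (Ha k d) as [r [Hr [Hra Hrd]]].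
  exists (rcomp (rconv q) (rcomp r q)). split.
  { apply comp_in; [apply conv_in | apply comp_in]; auto. }
  split.
  - exists a1; split; [exact H1|]. exists a2; split; auto.
  - intros i. exists (d i); split; [exact (Hd i)|]. exists (d i); auto.
Qed.

Lemma cls_eq_iff q (Hq : Pi q) a b : cls Pi a = cls Pi b <-> approx Pi a b.
Proof.
  split.
  - intros Heq. assert (Hb : cls Pi b b) by exact (approx_refl Hq b).
    rewrite <- Heq in Hb. exact Hb.
  - intros Hab. apply functional_extensionality; intros x.
    apply propositional_extensionality; unfold cls; split; intros Hx.
    + exact (approx_trans (approx_sym Hab) Hx).
    + exact (approx_trans Hab Hx).
Qed.

Lemma quot_rel_functional q (Hq : Pi q) C :
  quot Pi C -> exists! D, quot_rel Pi q C D.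
Proof.
  intros [a ->]. destruct (proj1 (sim_of Hq) a) as [b Hb].
  exists (cls Pi b). split; [exists a, b; auto|].
  intros D [a' [b' [Hab' [Ha' ->]]]].
  apply (cls_eq_iff Hq). apply (approx_transport Hq Hb Hab').
  exact (proj1 (cls_eq_iff Hq a a') Ha').
Qed.

Lemma quot_rel_conv q C D : quot_rel Pi (rconv q) D C <-> quot_rel Pi q C D.
Proof. split; intros [a [b [Hab [Ha Hb]]]]; exists b, a; auto. Qed.

(* Part (1): q/≈ is a permutation of Omega/≈, its inverse being q^-1/≈. *)
Theorem quot_rel_perm q (Hq : Pi q) : is_perm_of (quot Pi) (quot_rel Pi q).
Proof.
  split; [|split].
  - intros C D [a [b [_ [-> ->]]]]. split; eexists; eauto.
  - exact (quot_rel_functional Hq).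
  - intros D HD. destruct (quot_rel_functional (conv_in Hq) HD) as [C [HC Huniq]].
    exists C. split; [apply quot_rel_conv; exact HC|].
    intros C' HC'. apply Huniq, quot_rel_conv, HC'.
Qed.

Theorem invariant_rel_sim_image q (Hq : Pi q) (k : nat) (R : tup Omega k -> Prop) :
  invariant_under (approx Pi) R -> rel_sim q R (rimage q R).
Proof.
  intros HR a b Hab; split.
  - intros Ha. exists a; auto.
  - intros [a' [Ha' Ha'b]]. refine (proj1 (HR a' a _) Ha').
    intros i. apply (approx_transport (conv_in Hq) (Ha'b i) (Hab i)).
    exact (approx_refl Hq (b i)).
Qed.

Lemma trel_join q (V W : Type) (a b : V -> Omega) (c d : W -> Omega) :
  trel q a b -> trel q c d -> trel q (join a c) (join b d).
Proof. intros Hab Hcd [v|w]; simpl; auto. Qed.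

Theorem sat_invariant (Happrox : Pi (approx Pi)) (V : Type) (phi : formula Pi V) :
  forall q, Pi q -> forall a b, trel q a b -> (sat phi a <-> sat phi b).
Proof.
  induction phi as [V k R HR v | V f IH | V J fs IH | V W f IH | V l ks Q HQ fs IH];
    intros q Hq a b Hab; simpl.
  - apply (HR q Hq). intros j; apply Hab.
  - pose proof (IH q Hq a b Hab); tauto.
  - split; intros H j; apply (IH j q Hq a b Hab); auto.
  - split.
    + intros [c Hc]. destruct (lift_forward Hq c) as [d Hcd].
      exists d. exact (proj1 (IH q Hq _ _ (trel_join Hab Hcd)) Hc).
    + intros [d Hd]. destruct (lift_backward Hq d) as [c Hcd].
      exists c. exact (proj2 (IH q Hq _ _ (trel_join Hab Hcd)) Hd).
  - (* the relations defined by the subformulas are ≈-invariant, because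
       every point is ≈-equivalent to itself *)
    assert (Hrefl : forall (x : V -> Omega), trel (approx Pi) x x).
    { intros x z; exact (approx_refl Hq (x z)). }
    apply (HQ q Hq); intros i c d Hcd.
    + exact (IH i _ Happrox _ _ (trel_join (Hrefl a) Hcd)).
    + exact (IH i _ Happrox _ _ (trel_join (Hrefl b) Hcd)).
    + exact (IH i q Hq _ _ (trel_join Hab Hcd)).
Qed.

End Similarities.

Unset Implicit Arguments. Set Strict Implicit.

Theorem lemma14 (Omega : Type) (Pi : brel Omega -> Prop)
  (HPi : sim_monoid_inv Pi) (p : brel Omega) (Hp : Pi p) :
  is_perm_of (quot Pi) (quot_rel Pi p) /\
  (forall (k : nat) (R : tup Omega k -> Prop),
      invariant_under (approx Pi) R -> rel_sim p R (rimage p R)) /\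
  (Pi (approx Pi) ->
    forall (I : Type) (a b : I -> Omega), trel p a b ->
    forall phi : formula Pi I, sat phi a <-> sat phi b).
Proof.
  split; [|split].
  - exact (quot_rel_perm HPi Hp).
  - intros k R HR. exact (invariant_rel_sim_image HPi Hp HR).
  - intros Happrox I a b Hab phi. exact (sat_invariant HPi Happrox phi Hp Hab).
Qed.
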